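(* For $\epsilon\ll1$ and $a$ belonging to a bounded interval, let $u_{\epsilon,a}$ be solutions of $\epsilon^2\Delta u+\mu u-|u|^2u+\epsilon af=0$ on $\mathbb{R}^2$ converging to $0$ as $|x|\to\infty$. Then there exists a constant $K>0$ such that $$|u_{\epsilon,a}(x)|\leq K\big(\sqrt{\max(\mu(x),0)}+\epsilon^{1/3}\big),\qquad\forall x\in\mathbb{R}^2.$$ As a consequence, if for every $\xi=\rho e^{i\theta}$ one considers the local coordinates $s=(s_1,s_2)$ in the basis $(e^{i\theta},ie^{i\theta})$, then the rescaled maps $\tilde u_{\epsilon,a}(s)=\epsilon^{-1/3}u_{\epsilon,a}(\xi+s\epsilon^{2/3})$ are uniformly bounded on the half-planes $[s_0,\infty)\times\mathbb{R}$, for every $s_0\in\mathbb{R}$.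
   Context: Points of $\mathbb{R}^2$ are identified with complex numbers. $\mu\in C^\infty(\mathbb{R}^2,\mathbb{R})$ is radial, $\mu(x)=\mu_{\mathrm{rad}}(|x|)$, $\mu_{\mathrm{rad}}$ smooth with an even extension, $\mu\in L^\infty$, $\mu_{\mathrm{rad}}'<0$ on $(0,\infty)$, $\mu_{\mathrm{rad}}(\rho)=0$ for a unique $\rho>0$. $f\in C^\infty(\mathbb{R}^2,\mathbb{R}^2)$, $f(x)=f_{\mathrm{rad}}(|x|)\frac{x}{|x|}$, $f_{\mathrm{rad}}$ smooth with an odd extension, $f\in L^1\cap L^\infty$, $f_{\mathrm{rad}}>0$ on $(0,\infty)$. *)

From Stdlib Require Import Reals.
From mathcomp Require all_boot all_algebra all_classical all_reals all_analysis Rstruct Rstruct_topology.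

Module L1Def.
Import mathcomp.boot.all_boot mathcomp.algebra.all_algebra mathcomp.classical.all_classical
       mathcomp.reals.all_reals mathcomp.analysis.all_analysis
       mathcomp.reals_stdlib.Rstruct mathcomp.analysis_stdlib.Rstruct_topology.
Import numFieldNormedType.Exports.
Local Open Scope ring_scope.
Local Open Scope ereal_scope.
Definition integrable_R2 (g : Rdefinitions.R -> Rdefinitions.R -> Rdefinitions.R) : Prop :=
  ((@lebesgue_measure Rdefinitions.R) \x (@lebesgue_measure Rdefinitions.R)).-integrable
     setT (fun p : Rdefinitions.R * Rdefinitions.R => ((g p.1 p.2)%:E)).
End L1Def.

From Coquelicot Require Import Coquelicot.
Open Scope R_scope.

(** Points of R^2 are pairs (x, y) ~ x + i y; functions on R^2 are curried. *)
Definition rnorm (x y : R) : R := sqrt (x ^ 2 + y ^ 2).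

Definition dx (g : R -> R -> R) : R -> R -> R := fun x y => Derive (fun t => g t y) x.
Definition dy (g : R -> R -> R) : R -> R -> R := fun x y => Derive (fun t => g x t) y.

Fixpoint dpart (w : list bool) (g : R -> R -> R) : R -> R -> R :=
  match w with
  | nil => g
  | cons b w' => (if b then dy else dx) (dpart w' g)
  end.

Definition Ck (k : nat) (g : R -> R -> R) : Prop :=
  (forall w, (length w < k)%nat -> forall x y,
      ex_derive (fun t => dpart w g t y) x /\ ex_derive (fun t => dpart w g x t) y) /\
  (forall w, (length w <= k)%nat -> forall x y,
      continuous (fun p : R * R => dpart w g (fst p) (snd p)) (x, y)).

Definition smooth2 (g : R -> R -> R) : Prop := forall k, Ck k g.

Definition smooth1 (h : R -> R) : Prop := forall n x, ex_derive_n h n x.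

Definition lap (g : R -> R -> R) : R -> R -> R :=
  fun x y => dx (dx g) x y + dy (dy g) x y.

Definition reC (u : R -> R -> C) : R -> R -> R := fun x y => fst (u x y).
Definition imC (u : R -> R -> C) : R -> R -> R := fun x y => snd (u x y).
Definition lapC (u : R -> R -> C) : R -> R -> C :=
  fun x y => (lap (reC u) x y, lap (imC u) x y).

Definition mu_hyp (mu : R -> R -> R) (mu_rad : R -> R) (rho : R) : Prop :=
  smooth2 mu /\
  smooth1 mu_rad /\ (forall r, mu_rad (- r) = mu_rad r) /\
  (forall x y, mu x y = mu_rad (rnorm x y)) /\
  (exists M, forall x y, Rabs (mu x y) <= M) /\
  (forall r, 0 < r -> Derive mu_rad r < 0) /\
  0 < rho /\ mu_rad rho = 0 /\ (forall r, 0 < r -> mu_rad r = 0 -> r = rho).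

Definition f_hyp (f : R -> R -> C) (f_rad : R -> R) : Prop :=
  smooth2 (reC f) /\ smooth2 (imC f) /\
  smooth1 f_rad /\ (forall r, f_rad (- r) = - f_rad r) /\
  (forall x y, (x, y) <> (0, 0) ->
     f x y = (f_rad (rnorm x y) * (x / rnorm x y), f_rad (rnorm x y) * (y / rnorm x y))) /\
  L1Def.integrable_R2 (fun x y => Cmod (f x y)) /\
  (exists M, forall x y, Cmod (f x y) <= M) /\
  (forall r, 0 < r -> 0 < f_rad r).

Definition is_solution (mu : R -> R -> R) (f : R -> R -> C) (eps a : R)
    (u : R -> R -> C) : Prop :=
  Ck 2 (reC u) /\ Ck 2 (imC u) /\
  (forall x y,
     Cplus (Cplus (Cmult (RtoC (eps ^ 2)) (lapC u x y)) (Cmult (RtoC (mu x y)) (u x y)))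
       (Cplus (Copp (Cmult (RtoC (Cmod (u x y) ^ 2)) (u x y)))
              (Cmult (RtoC (eps * a)) (f x y))) = RtoC 0) /\
  (forall e, 0 < e -> exists R0, forall x y, R0 < rnorm x y -> Cmod (u x y) < e).

(** Set [t = eps^(1/3)] and [q = (rho^2 - |x|^2) / (2 rho)], and compare [|u|^2] with the
    barrier [P = b^2 (L * spos (t^2) q + t^2)], where [spos e] is a smooth positive part,
    [q^+ <= spos e q <= q^+ + e/2], and [mu <= L q^+]. If [|u|^2 - P] were positive somewhere,
    it would attain a positive maximum, since [u -> 0] at infinity while [P >= (b t)^2]. At that
    point [Re (conj u Lap u) <= Lap P / 2 = O(b^2 L / t^2)], whereas the equation gives
    [eps^2 Re (conj u Lap u) = |u|^4 - mu |u|^2 - eps a Re (conj u f) >= |u|^4 / 4 > (b t)^4 / 4]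
    because [mu <= P/2 < |u|^2/2] and [|u| > b t]; for [b] large these are incompatible.
    Hence [|u|^2 <= K (q^+ + t^2)]. Finally [q^+ <= mu^+ / c] because [mu_rad] has slope
    bounded away from 0 near [rho], and [q^+ = O(eps^(2/3))] at the points
    [xi + eps^(2/3) s] with [s_1 >= s_0]. *)

From Stdlib Require Import Reals Lra Psatz.
From mathcomp Require all_boot all_order all_algebra all_classical all_reals all_analysis Rstruct Rstruct_topology.

Module ExtremeValue.
Import mathcomp.boot.all_boot mathcomp.order.all_order mathcomp.algebra.all_algebra mathcomp.classical.all_classical
       mathcomp.reals.all_reals mathcomp.analysis.all_analysis
       mathcomp.reals_stdlib.Rstruct mathcomp.analysis_stdlib.Rstruct_topology.
Import numFieldNormedType.Exports.
Import Order.TTheory GRing.Theory Num.Theory.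
Local Open Scope classical_set_scope.
Local Open Scope ring_scope.

Lemma continuous_attains_max_on_square (D : R -> R -> R) (a b : R) : Rle a b ->
  (forall x y (eps : R), Rlt 0 eps -> exists del : R, Rlt 0 del /\
     forall x' y', Rlt (Rabs (Rminus x' x)) del -> Rlt (Rabs (Rminus y' y)) del ->
       Rlt (Rabs (Rminus (D x' y') (D x y))) eps) ->
  exists x0 y0, (Rle a x0 /\ Rle x0 b) /\ (Rle a y0 /\ Rle y0 b) /\
    forall x y, (Rle a x /\ Rle x b) -> (Rle a y /\ Rle y b) -> Rle (D x y) (D x0 y0).
Proof.
move=> /RleP ab Dc.
pose A := (`[a, b] `*` `[a, b]) : set (R * R).
have A0 : A !=set0 by exists (a, a); split; rewrite /= in_itv /= lexx ab.
have cA : compact A by apply: compact_setX; exact: segment_compact.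
have cD : {within A, continuous (fun p : R * R => D p.1 p.2)}.
  apply: continuous_subspaceT => -[x y].
  apply/(@cvgrPdist_lt _ R^o) => e /RltP e0.
  have [del [/RltP del0 Hdel]] := Dc x y e e0.
  exists ([set x' | Rlt (Rabs (Rminus x' x)) del], [set y' | Rlt (Rabs (Rminus y' y)) del]) => /=.
    by split; exists del => //= z; rewrite /ball /= => /RltP; rewrite -RabsE -RminusE Rabs_minus_sym.
  case=> x' y' /= [/= hx hy].
  by rewrite distrC -RminusE -RabsE; apply/RltP; exact: Hdel.
have [[x0 y0] /set_mem [/= hx0 hy0] hmax] := compact_EVT_max A0 cA cD.
exists x0, y0; split; [|split].
- by move: hx0; rewrite in_itv /= => /andP[/RleP ? /RleP ?].
- by move: hy0; rewrite in_itv /= => /andP[/RleP ? /RleP ?].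
move=> x y [/RleP hx1 /RleP hx2] [/RleP hy1 /RleP hy2]; apply/RleP.
by apply: (hmax (x, y)); apply/mem_set; split; rewrite /= in_itv /=; apply/andP; split.
Qed.
End ExtremeValue.

From Coquelicot Require Import Coquelicot.
Open Scope R_scope.

(** * Calculus at a maximum point *)

Lemma derive2_nonpos_at_max (g g1 : R -> R) (x0 g2 : R) :
  (forall t, is_derive g t (g1 t)) -> is_derive g1 x0 g2 ->
  (forall t, g t <= g x0) -> g2 <= 0.
Proof.
  intros Hg Hg1 Hmax.
  assert (Hcrit : g1 x0 = 0).
  { pose proof (proj1 (is_derive_Reals _ _ _) (Hg x0)) as Hl.
    exact (deriv_maximum g (x0 - 1) (x0 + 1) x0 (exist _ (g1 x0) Hl)
             ltac:(lra) ltac:(lra) (fun x _ _ => Hmax x)). }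
  apply Rnot_lt_le; intros Hpos.
  apply is_derive_Reals in Hg1.
  destruct (Hg1 (g2 / 2)) as [[d hd] Hd]; [lra|]; simpl in Hd.
  (* g1 vanishes at x0 and increases through it, so g increases right of x0 *)
  assert (Hright : forall s, 0 < s < d -> 0 < g1 (x0 + s)).
  { intros s hs.
    specialize (Hd s ltac:(lra) ltac:(rewrite Rabs_right; lra)).
    rewrite Hcrit, Rminus_0_r in Hd. apply Rabs_def2 in Hd.
    replace (g1 (x0 + s)) with (g1 (x0 + s) / s * s) by (field; lra).
    apply Rmult_lt_0_compat; lra. }
  destruct (MVT_cor2 g g1 x0 (x0 + d / 2)) as [c [Hc hc]];
    [lra | intros; apply is_derive_Reals, Hg |].
  specialize (Hright (c - x0) ltac:(lra)). replace (x0 + (c - x0)) with c in Hright by ring.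
  specialize (Hmax (x0 + d / 2)). nra.
Qed.

Lemma sum_sq_sub_max_derive2 (v w p v1 w1 p1 : R -> R) (x0 v2 w2 p2 : R) :
  (forall t, is_derive v t (v1 t)) -> (forall t, is_derive w t (w1 t)) ->
  (forall t, is_derive p t (p1 t)) ->
  is_derive v1 x0 v2 -> is_derive w1 x0 w2 -> is_derive p1 x0 p2 ->
  (forall t, v t ^ 2 + w t ^ 2 - p t <= v x0 ^ 2 + w x0 ^ 2 - p x0) ->
  v x0 * v2 + w x0 * w2 <= p2 / 2.
Proof.
  intros Hv Hw Hp Hv1 Hw1 Hp1 Hmax.
  assert (Hd : forall t, is_derive (fun t => v t ^ 2 + w t ^ 2 - p t) t
                           (2 * (v1 t * v t + w1 t * w t) - p1 t)).
  { intros t. replace (2 * (v1 t * v t + w1 t * w t) - p1 t)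
      with (INR 2 * v1 t * v t ^ 1 + INR 2 * w1 t * w t ^ 1 - p1 t) by (simpl; ring).
    apply (is_derive_minus (fun t => v t ^ 2 + w t ^ 2) p); auto.
    apply (is_derive_plus (fun t => v t ^ 2) (fun t => w t ^ 2)); apply is_derive_pow; auto. }
  pose proof (is_derive_minus _ _ x0 _ _
    (is_derive_scal _ x0 2 _ (is_derive_plus _ _ x0 _ _
       (is_derive_mult v1 v x0 _ _ Hv1 (Hv x0) Rmult_comm)
       (is_derive_mult w1 w x0 _ _ Hw1 (Hw x0) Rmult_comm))) Hp1) as Hd2.
  pose proof (derive2_nonpos_at_max _ _ _ _ Hd Hd2 Hmax) as H.
  unfold minus, plus, scal, mult, opp in H; simpl in H. nra.
Qed.

(** * The barrier *)

Definition spos (e q : R) : R := (q + sqrt (q ^ 2 + e ^ 2)) / 2.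
Definition spos1 (e q : R) : R := (1 + q / sqrt (q ^ 2 + e ^ 2)) / 2.
Definition spos2 (e q : R) : R := e ^ 2 / (2 * ((q ^ 2 + e ^ 2) * sqrt (q ^ 2 + e ^ 2))).

Section SmoothPositivePart.
Variables (e q : R).
Hypothesis he : 0 < e.

Let w := sqrt (q ^ 2 + e ^ 2).

Lemma spos_root_facts : 0 < w /\ w * w = q ^ 2 + e ^ 2 /\ Rabs q < w /\ e <= w /\ w <= Rabs q + e.
Proof.
  assert (hw2 : 0 < q ^ 2 + e ^ 2) by nra.
  pose proof (sqrt_lt_R0 _ hw2) as hw. pose proof (sqrt_sqrt _ (Rlt_le _ _ hw2)) as hs.
  fold w in hw, hs.
  assert (Rabs q * Rabs q = q ^ 2) by (rewrite <- Rabs_mult, Rabs_right; [ring | nra]).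
  pose proof (Rabs_pos q).
  repeat split; nra.
Qed.

Lemma is_derive_spos : is_derive (spos e) q (spos1 e q).
Proof.
  destruct spos_root_facts as (hw & hs & _).
  unfold spos, spos1. auto_derive; [nra|].
  replace (q * (q * 1) + e * (e * 1)) with (q ^ 2 + e ^ 2) by ring. fold w. field. lra.
Qed.

Lemma is_derive_spos1 : is_derive (spos1 e) q (spos2 e q).
Proof.
  destruct spos_root_facts as (hw & hs & _).
  unfold spos1, spos2. auto_derive;
    replace (q * (q * 1) + e * (e * 1)) with (q ^ 2 + e ^ 2) by ring; fold w.
  - repeat split; nra.
  - rewrite <- hs. replace (e ^ 2) with (w * w - q ^ 2) by lra. field. lra.
Qed.

Lemma spos_ge : Rmax q 0 <= spos e q.
Proof.
  destruct spos_root_facts as (_ & _ & h & _). unfold spos, Rmax, Rabs in *; fold w.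
  destruct (Rle_dec q 0), (Rcase_abs q); lra.
Qed.

Lemma spos_le : spos e q <= Rmax q 0 + e / 2.
Proof.
  destruct spos_root_facts as (_ & _ & _ & _ & h). unfold spos, Rmax, Rabs in *; fold w.
  destruct (Rle_dec q 0), (Rcase_abs q); lra.
Qed.

Lemma spos1_ge0 : 0 <= spos1 e q.
Proof.
  destruct spos_root_facts as (hw & _ & h & _). unfold spos1; fold w.
  assert (- w <= q) by (unfold Rabs in h; destruct (Rcase_abs q); lra).
  assert (-1 <= q / w).
  { apply (Rmult_le_reg_r w); [lra|]. unfold Rdiv. rewrite Rmult_assoc, Rinv_l by lra. lra. }
  lra.
Qed.

Lemma spos2_le : spos2 e q <= 1 / (2 * e).
Proof.
  destruct spos_root_facts as (hw & hs & _ & hew & _). unfold spos2; fold w. rewrite <- hs.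
  assert (e * e * e <= w * w * w) by (apply Rmult_le_compat; nra).
  assert (0 < w * w * w) by (repeat apply Rmult_lt_0_compat; lra).
  apply Rmult_le_reg_r with (2 * (w * w * w) * (2 * e)); [apply Rmult_lt_0_compat; lra|].
  unfold Rdiv. field_simplify; nra.
Qed.

Lemma neg_mul_spos2_le : - q * spos2 e q <= 1 / 2.
Proof.
  destruct spos_root_facts as (hw & hs & h & hew & _). unfold spos2; fold w. rewrite <- hs.
  assert (- q <= w) by (unfold Rabs in h; destruct (Rcase_abs q); lra).
  assert (0 < w * w * w) by (repeat apply Rmult_lt_0_compat; lra).
  apply Rmult_le_reg_r with (2 * (w * w * w)); [lra|].
  unfold Rdiv. field_simplify; nra.
Qed.

End SmoothPositivePart.

(* A smooth stand-in for [rho - |x|]: both vanish on the circle [|x| = rho] with the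
   same gradient there. *)
Definition qrho (rho x y : R) : R := (rho ^ 2 - x ^ 2 - y ^ 2) / (2 * rho).

Lemma qrho_sym rho x y : qrho rho x y = qrho rho y x.
Proof. unfold qrho. f_equal. ring. Qed.

Lemma is_derive_comp_qrho (rho : R) (phi : R -> R) (x y d : R) : 0 < rho ->
  is_derive phi (qrho rho x y) d ->
  is_derive (fun t => phi (qrho rho t y)) x (d * (- x / rho)).
Proof.
  intros hrho Hd. rewrite Rmult_comm. apply (is_derive_comp phi (fun t => qrho rho t y)); auto.
  unfold qrho. auto_derive; [lra | field; lra].
Qed.

Lemma is_derive2_comp_qrho (rho : R) (phi1 : R -> R) (x y d2 : R) : 0 < rho ->
  is_derive phi1 (qrho rho x y) d2 ->
  is_derive (fun t => phi1 (qrho rho t y) * (- t / rho)) x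
    (d2 * (x / rho) ^ 2 - phi1 (qrho rho x y) / rho).
Proof.
  intros hrho Hd2.
  pose proof (is_derive_mult (fun t => phi1 (qrho rho t y)) (fun t => - t / rho) x _ (- 1 / rho)
    (is_derive_comp_qrho rho phi1 x y d2 hrho Hd2)
    ltac:(auto_derive; [lra | field; lra]) Rmult_comm) as H.
  eapply is_derive_ext; [reflexivity|].
  replace (d2 * (x / rho) ^ 2 - phi1 (qrho rho x y) / rho)
    with (plus (mult (d2 * (- x / rho)) (- x / rho)) (mult (phi1 (qrho rho x y)) (- 1 / rho)))
    by (unfold plus, mult; simpl; field; lra).
  exact H.
Qed.

Lemma is_derive_barrier_profile B L e z : 0 < e ->
  is_derive (fun z => B * (L * spos e z + e)) z (B * L * spos1 e z).
Proof.
  intros he.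
  replace (B * L * spos1 e z) with (B * (L * spos1 e z + 0)) by ring.
  apply (is_derive_scal (fun z => L * spos e z + e)).
  apply (is_derive_plus (fun z => L * spos e z) (fun _ => e)).
  - apply (is_derive_scal (spos e)), is_derive_spos; auto.
  - apply (is_derive_const (V:=R_NormedModule)).
Qed.

Definition barrier (B L e rho x y : R) : R := B * (L * spos e (qrho rho x y) + e).
Definition barrier_d1 (B L e rho x y : R) : R :=
  B * L * spos1 e (qrho rho x y) * (- x / rho).
Definition barrier_d2 (B L e rho x y : R) : R :=
  B * L * (spos2 e (qrho rho x y) * (x / rho) ^ 2 - spos1 e (qrho rho x y) / rho).

Section Barrier.
Variables (B L e rho : R).
Hypotheses (hB : 0 <= B) (hL : 0 <= L) (he : 0 < e) (hrho : 0 < rho).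

Lemma is_derive_barrier_x x y :
  is_derive (fun t => barrier B L e rho t y) x (barrier_d1 B L e rho x y).
Proof.
  apply (is_derive_comp_qrho rho (fun z => B * (L * spos e z + e))); auto.
  apply is_derive_barrier_profile; assumption.
Qed.

Lemma is_derive_barrier_d1_x x y :
  is_derive (fun t => barrier_d1 B L e rho t y) x (barrier_d2 B L e rho x y).
Proof.
  unfold barrier_d1, barrier_d2.
  apply (is_derive_ext (fun t => B * L * (spos1 e (qrho rho t y) * (- t / rho))));
    [intros t; symmetry; apply Rmult_assoc|].
  apply (is_derive_scal (fun t => spos1 e (qrho rho t y) * (- t / rho)) x (B * L)).
  apply (is_derive2_comp_qrho rho (spos1 e)); auto. apply is_derive_spos1; auto.
Qed.

Lemma is_derive_barrier_y x y :
  is_derive (fun t => barrier B L e rho x t) y (barrier_d1 B L e rho y x).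
Proof.
  apply (is_derive_ext (fun t => barrier B L e rho t x));
    [intros t; unfold barrier; rewrite qrho_sym; reflexivity|].
  apply is_derive_barrier_x.
Qed.

Lemma barrier_laplacian_le x y :
  barrier_d2 B L e rho x y + barrier_d2 B L e rho y x <= B * L * (1 / (2 * e) + 1 / rho).
Proof.
  unfold barrier_d2. rewrite (qrho_sym rho y x).
  set (q := qrho rho x y).
  pose proof (spos2_le e q he). pose proof (neg_mul_spos2_le e q he).
  pose proof (spos1_ge0 e q he).
  assert (Hxy : (x / rho) ^ 2 + (y / rho) ^ 2 = 1 + 2 / rho * (- q)) by (unfold q, qrho; field; lra).
  assert (0 <= spos1 e q / rho) by (apply Rdiv_le_0_compat; lra).
  assert (2 / rho * (- q * spos2 e q) <= 1 / rho).
  { replace (1 / rho) with (2 / rho * (1 / 2)) by (field; lra).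
    apply Rmult_le_compat_l; [apply Rdiv_le_0_compat|]; lra. }
  rewrite <- Rmult_plus_distr_l. apply Rmult_le_compat_l; [nra|].
  replace (spos2 e q * (x / rho) ^ 2 - spos1 e q / rho + (spos2 e q * (y / rho) ^ 2 - spos1 e q / rho))
    with (spos2 e q * ((x / rho) ^ 2 + (y / rho) ^ 2) - 2 * (spos1 e q / rho)) by ring.
  rewrite Hxy. lra.
Qed.

End Barrier.

(** * The maximum principle *)

Lemma Ck_continuous k g x y : Ck k g -> continuous (fun p : R * R => g (fst p) (snd p)) (x, y).
Proof. intros [_ H]. apply (H nil); simpl; lia. Qed.

Lemma Ck2_is_derive_x g x y : Ck 2 g ->
  is_derive (fun t => g t y) x (dx g x y) /\ is_derive (fun t => dx g t y) x (dx (dx g) x y).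
Proof.
  intros [H _].
  destruct (H nil ltac:(simpl; lia) x y) as [H0 _].
  destruct (H (cons false nil) ltac:(simpl; lia) x y) as [H1 _].
  split; apply Derive_correct; assumption.
Qed.

Lemma Ck2_is_derive_y g x y : Ck 2 g ->
  is_derive (fun t => g x t) y (dy g x y) /\ is_derive (fun t => dy g x t) y (dy (dy g) x y).
Proof.
  intros [H _].
  destruct (H nil ltac:(simpl; lia) x y) as [_ H0].
  destruct (H (cons true nil) ltac:(simpl; lia) x y) as [_ H1].
  split; apply Derive_correct; assumption.
Qed.

Lemma continuous_sq (g : R * R -> R) p : continuous g p -> continuous (fun q => g q ^ 2) p.
Proof.
  intros Hg. apply (continuous_comp g (fun z => z ^ 2)); auto.
  apply (ex_derive_continuous (fun z => z ^ 2)). auto_derive. auto.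
Qed.

Lemma continuous_qrho rho x y : continuous (fun p : R * R => qrho rho (fst p) (snd p)) (x, y).
Proof.
  unfold qrho, Rdiv.
  apply (continuous_mult (K:=R_AbsRing) (fun p : R * R => rho ^ 2 - fst p ^ 2 - snd p ^ 2));
    [|apply continuous_const].
  apply (continuous_minus (V:=R_NormedModule)); [apply (continuous_minus (V:=R_NormedModule))|];
    [apply continuous_const | |]; apply continuous_sq;
    [apply (continuous_fst (U:=R_UniformSpace) (V:=R_UniformSpace))
    |apply (continuous_snd (U:=R_UniformSpace) (V:=R_UniformSpace))].
Qed.

Lemma continuous_barrier B L e rho x y : 0 < e ->
  continuous (fun p : R * R => barrier B L e rho (fst p) (snd p)) (x, y).
Proof.
  intros he.
  apply (continuous_comp (fun p : R * R => qrho rho (fst p) (snd p)) (fun z => B * (L * spos e z + e))).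
  - apply continuous_qrho.
  - apply (ex_derive_continuous (fun z => B * (L * spos e z + e))).
    eexists. apply is_derive_barrier_profile; auto.
Qed.

Lemma rnorm_ge x y : Rabs x <= rnorm x y /\ Rabs y <= rnorm x y.
Proof.
  pose proof (Rmax_Cmod (x, y)) as H. change (Cmod (x, y)) with (rnorm x y) in H. simpl in H.
  split; eapply Rle_trans; [apply Rmax_l | apply H | apply Rmax_r | apply H].
Qed.

Lemma exists_global_max (D : R -> R -> R) (R0 x y : R) :
  (forall x y, continuous (fun p : R * R => D (fst p) (snd p)) (x, y)) ->
  (forall x y, R0 < rnorm x y -> D x y < 0) -> 0 < D x y ->
  exists x0 y0, 0 < D x0 y0 /\ forall x' y', D x' y' <= D x0 y0.
Proof.
  intros Hc Hout Hpos.
  set (M := Rabs R0 + Rabs x + Rabs y + 1).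
  pose proof (Rabs_pos R0). pose proof (Rabs_pos x). pose proof (Rabs_pos y).
  destruct (ExtremeValue.continuous_attains_max_on_square D (- M) M) as (x0 & y0 & _ & _ & Hm).
  - unfold M; lra.
  - intros a b eps he.
    destruct (proj1 (filterlim_locally _ _) (Hc a b) (mkposreal eps he)) as [d Hd].
    exists d. split; [apply cond_pos|]. intros x' y' hx hy.
    apply (Hd (x', y')). split; assumption.
  - assert (Hin : forall x' y', Rabs x' <= M -> Rabs y' <= M -> D x' y' <= D x0 y0)
      by (intros x' y' hx hy; apply Hm; apply Rabs_le_between; assumption).
    assert (Hxy : D x y <= D x0 y0) by (apply Hin; unfold M; lra).
    exists x0, y0. split; [lra|]. intros x' y'.
    destruct (rnorm_ge x' y').
    destruct (Rle_dec (Rabs x') M), (Rle_dec (Rabs y') M); [apply Hin; assumption| | |];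
      assert (D x' y' < 0) by (apply Hout; pose proof (Rle_abs R0); unfold M in *; lra); lra.
Qed.

Lemma lap_dot_le_at_max (u1 u2 : R -> R -> R) (B L e rho x0 y0 : R) :
  0 <= B -> 0 <= L -> 0 < e -> 0 < rho -> Ck 2 u1 -> Ck 2 u2 ->
  (forall x y, u1 x y ^ 2 + u2 x y ^ 2 - barrier B L e rho x y
               <= u1 x0 y0 ^ 2 + u2 x0 y0 ^ 2 - barrier B L e rho x0 y0) ->
  u1 x0 y0 * lap u1 x0 y0 + u2 x0 y0 * lap u2 x0 y0 <= B * L * (1 / (2 * e) + 1 / rho) / 2.
Proof.
  intros hB hL he hrho H1 H2 Hmax.
  assert (Hx : u1 x0 y0 * dx (dx u1) x0 y0 + u2 x0 y0 * dx (dx u2) x0 y0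
               <= barrier_d2 B L e rho x0 y0 / 2).
  { apply (sum_sq_sub_max_derive2 (fun t => u1 t y0) (fun t => u2 t y0)
      (fun t => barrier B L e rho t y0) (fun t => dx u1 t y0) (fun t => dx u2 t y0)
      (fun t => barrier_d1 B L e rho t y0)).
    - intros t. apply (proj1 (Ck2_is_derive_x u1 t y0 H1)).
    - intros t. apply (proj1 (Ck2_is_derive_x u2 t y0 H2)).
    - intros t. apply is_derive_barrier_x; assumption.
    - apply (proj2 (Ck2_is_derive_x u1 x0 y0 H1)).
    - apply (proj2 (Ck2_is_derive_x u2 x0 y0 H2)).
    - apply is_derive_barrier_d1_x; assumption.
    - intros t. apply Hmax. }
  assert (Hy : u1 x0 y0 * dy (dy u1) x0 y0 + u2 x0 y0 * dy (dy u2) x0 y0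
               <= barrier_d2 B L e rho y0 x0 / 2).
  { apply (sum_sq_sub_max_derive2 (fun t => u1 x0 t) (fun t => u2 x0 t)
      (fun t => barrier B L e rho x0 t) (fun t => dy u1 x0 t) (fun t => dy u2 x0 t)
      (fun t => barrier_d1 B L e rho t x0)).
    - intros t. apply (proj1 (Ck2_is_derive_y u1 x0 t H1)).
    - intros t. apply (proj1 (Ck2_is_derive_y u2 x0 t H2)).
    - intros t. apply is_derive_barrier_y; assumption.
    - apply (proj2 (Ck2_is_derive_y u1 x0 y0 H1)).
    - apply (proj2 (Ck2_is_derive_y u2 x0 y0 H2)).
    - apply is_derive_barrier_d1_x; assumption.
    - intros t. apply Hmax. }
  pose proof (barrier_laplacian_le B L e rho hB hL he hrho x0 y0).
  unfold lap. lra.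
Qed.

Lemma sq_reC_add_sq_imC (u : R -> R -> C) x y :
  reC u x y ^ 2 + imC u x y ^ 2 = Cmod (u x y) ^ 2.
Proof. symmetry. apply Cmod2_alt. Qed.

Lemma Re_Cconj_mul_le (z w : C) : Rabs (Re (Cconj z * w)) <= Cmod z * Cmod w.
Proof. rewrite <- Cmod_conj, <- Cmod_mult. apply re_le_Cmod. Qed.

Lemma solution_identity (mu : R -> R -> R) (f u : R -> R -> C) (eps a x y : R) :
  Cplus (Cplus (Cmult (RtoC (eps ^ 2)) (lapC u x y)) (Cmult (RtoC (mu x y)) (u x y)))
       (Cplus (Copp (Cmult (RtoC (Cmod (u x y) ^ 2)) (u x y)))
              (Cmult (RtoC (eps * a)) (f x y))) = RtoC 0 ->
  eps ^ 2 * (reC u x y * lap (reC u) x y + imC u x y * lap (imC u) x y)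
  = - mu x y * Cmod (u x y) ^ 2 + Cmod (u x y) ^ 4 - eps * a * Re (Cconj (u x y) * f x y).
Proof.
  intros H.
  pose proof (f_equal fst H) as E1. pose proof (f_equal snd H) as E2.
  unfold lapC in E1, E2. simpl in E1, E2.
  pose proof (Cmod2_alt (u x y)) as HV. unfold Re, Im in HV.
  unfold reC, imC in *.
  replace (Re (Cconj (u x y) * f x y)) with (fst (u x y) * fst (f x y) + snd (u x y) * snd (f x y))
    by (unfold Re; simpl; ring).
  set (u1 := fst (u x y)) in *. set (u2 := snd (u x y)) in *.
  set (V := Cmod (u x y)) in *.
  set (L1 := lap (fun x y => fst (u x y)) x y) in *.
  set (L2 := lap (fun x y => snd (u x y)) x y) in *.
  assert (D1 : eps ^ 2 * L1 = - mu x y * u1 + V ^ 2 * u1 - eps * a * fst (f x y)) by lra.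
  assert (D2 : eps ^ 2 * L2 = - mu x y * u2 + V ^ 2 * u2 - eps * a * snd (f x y)) by lra.
  transitivity (u1 * (eps ^ 2 * L1) + u2 * (eps ^ 2 * L2)); [ring|].
  rewrite D1, D2.
  replace (V ^ 4) with (V ^ 2 * V ^ 2) by ring. rewrite HV. ring.
Qed.

(* Read at a maximum point of [|u|^2 - barrier] with [eps = t^3]: [s = |u|], [m = mu],
   [d = Re (conj u f)], [X = Re (conj u Lap u)]. The identity forces
   [t^6 X >= s^4/4 > (b t)^4/4], the barrier bound forces [t^6 X <= (b t)^4/4]. *)
Lemma max_point_absurd (t b L rho A F a m s d X : R) :
  0 < t <= 1 -> 0 < rho -> 0 <= L -> 0 <= A -> 0 <= F ->
  4 * A * F <= b -> L * (1 + 2 / rho) <= b -> 2 <= b ->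
  b * t < s -> m <= s ^ 2 / 2 -> Rabs a <= A -> Rabs d <= s * F ->
  t ^ 6 * X = - m * s ^ 2 + s ^ 4 - t ^ 3 * a * d ->
  X <= b ^ 2 * L * (1 / (2 * t ^ 2) + 1 / rho) / 2 -> False.
Proof.
  intros ht hrho hL hA hF hbAF hbL hb2 hs hm ha hd HX HXle.
  assert (ht3 : 0 < t ^ 3) by (apply pow_lt; lra).
  assert (hbt : 0 < b * t) by nra.
  assert (hbt2 : (b * t) ^ 2 < s ^ 2) by nra.
  assert (hbt3 : (b * t) ^ 3 < s ^ 3) by nra.
  assert (Hforce : t ^ 3 * a * d <= s ^ 4 / 4).
  { assert (t ^ 3 * a * d <= t ^ 3 * (A * (s * F))).
    { rewrite Rmult_assoc. apply Rmult_le_compat_l; [lra|].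
      eapply Rle_trans; [apply Rle_abs|]. rewrite Rabs_mult.
      apply Rmult_le_compat; auto using Rabs_pos. }
    assert (4 * A * F * t ^ 3 <= (b * t) ^ 3).
    { replace ((b * t) ^ 3) with (b ^ 3 * t ^ 3) by ring. apply Rmult_le_compat_r; nra. }
    nra. }
  assert (Hlow : s ^ 4 / 4 <= t ^ 6 * X) by nra.
  assert (Hup : t ^ 6 * X <= b ^ 4 * t ^ 4 / 4).
  { assert (t ^ 6 * X <= b ^ 2 * L * (t ^ 4 / 4 + t ^ 2 * t ^ 4 / (2 * rho))).
    { eapply Rle_trans; [apply Rmult_le_compat_l; [apply pow_le; lra | exact HXle]|].
      right. field. lra. }
    assert (t ^ 2 * t ^ 4 / (2 * rho) <= t ^ 4 / (2 * rho)).
    { apply Rmult_le_compat_r; [apply Rlt_le, Rinv_0_lt_compat; lra|].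
      assert (0 <= t ^ 4) by (apply pow_le; lra). assert (t ^ 2 <= 1) by nra. nra. }
    assert (b ^ 2 * L * (t ^ 4 / 4 + t ^ 4 / (2 * rho)) = b ^ 2 * t ^ 4 / 4 * (L * (1 + 2 / rho)))
      by (field; lra).
    assert (b ^ 2 * t ^ 4 / 4 * (L * (1 + 2 / rho)) <= b ^ 2 * t ^ 4 / 4 * (b * b)).
    { apply Rmult_le_compat_l; nra. }
    assert (b ^ 2 * L * (t ^ 4 / 4 + t ^ 2 * t ^ 4 / (2 * rho))
            <= b ^ 2 * L * (t ^ 4 / 4 + t ^ 4 / (2 * rho))) by (apply Rmult_le_compat_l; nra).
    replace (b ^ 4 * t ^ 4 / 4) with (b ^ 2 * t ^ 4 / 4 * (b * b)) by field. lra. }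
  assert ((b * t) ^ 4 < s ^ 4) by nra.
  nra.
Qed.

Definition barrier_scale (A F L rho : R) : R := 4 * A * F + L * (1 + 2 / rho) + 2.

Lemma barrier_scale_ge A F L rho : 0 <= A -> 0 <= F -> 0 <= L -> 0 < rho ->
  4 * A * F <= barrier_scale A F L rho /\ L * (1 + 2 / rho) <= barrier_scale A F L rho /\
  2 <= barrier_scale A F L rho.
Proof.
  intros hA hF hL hrho. unfold barrier_scale.
  assert (0 <= L * (1 + 2 / rho)) by (apply Rmult_le_pos; [|pose proof (Rdiv_lt_0_compat 2 rho)]; lra).
  assert (0 <= A * F) by (apply Rmult_le_pos; assumption).
  repeat split; lra.
Qed.

Lemma barrier_ge_lift B L e rho x y : 0 <= B -> 0 <= L -> 0 < e -> B * e <= barrier B L e rho x y.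
Proof.
  intros hB hL he. unfold barrier.
  pose proof (spos_ge e (qrho rho x y) he). pose proof (Rmax_r (qrho rho x y) 0).
  assert (0 <= L * spos e (qrho rho x y)) by (apply Rmult_le_pos; lra).
  nra.
Qed.

Lemma barrier_ge_twice (mu : R -> R -> R) B L e rho x y : 2 <= B -> 0 <= L -> 0 < e ->
  mu x y <= L * Rmax (qrho rho x y) 0 -> 2 * mu x y <= barrier B L e rho x y.
Proof.
  intros hB hL he Hmu. unfold barrier.
  pose proof (spos_ge e (qrho rho x y) he). pose proof (Rmax_r (qrho rho x y) 0).
  assert (L * Rmax (qrho rho x y) 0 <= L * spos e (qrho rho x y)) by (apply Rmult_le_compat_l; lra).
  assert (0 <= L * Rmax (qrho rho x y) 0) by (apply Rmult_le_pos; lra).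
  nra.
Qed.

Lemma solution_sq_le_barrier (mu : R -> R -> R) (f u : R -> R -> C) (rho L F A t a : R) :
  0 < rho -> 0 <= L -> 0 <= F -> 0 <= A ->
  (forall x y, mu x y <= L * Rmax (qrho rho x y) 0) -> (forall x y, Cmod (f x y) <= F) ->
  0 < t <= 1 -> Rabs a <= A -> is_solution mu f (t ^ 3) a u ->
  forall x y, Cmod (u x y) ^ 2 <= barrier (barrier_scale A F L rho ^ 2) L (t ^ 2) rho x y.
Proof.
  intros hrho hL hF hA Hmu Hf ht ha (H1 & H2 & Heq & Hdecay) x y.
  set (b := barrier_scale A F L rho).
  pose proof (barrier_scale_ge A F L rho hA hF hL hrho) as hb. fold b in hb.
  assert (he : 0 < t ^ 2) by (apply pow_lt; lra).
  set (P := barrier (b ^ 2) L (t ^ 2) rho).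
  assert (HP : forall x y, (b * t) ^ 2 <= P x y /\ 2 * mu x y <= P x y).
  { intros x' y'. replace ((b * t) ^ 2) with (b ^ 2 * t ^ 2) by ring.
    split; [apply barrier_ge_lift | apply barrier_ge_twice]; auto; nra. }
  set (D := fun x y => reC u x y ^ 2 + imC u x y ^ 2 - P x y).
  apply Rnot_lt_le. intros Hlt.
  destruct (Hdecay (b * t)) as [R0 HR0]; [nra|].
  destruct (exists_global_max D R0 x y) as (x0 & y0 & HD0 & Hmax).
  - intros x' y'. unfold D.
    apply (continuous_minus (V:=R_NormedModule)); [apply (continuous_plus (V:=R_NormedModule))|];
      [apply continuous_sq; apply (Ck_continuous 2); assumption ..|].
    apply continuous_barrier; assumption.
  - intros x' y' Hr. specialize (HR0 x' y' Hr). pose proof (Cmod_ge_0 (u x' y')).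
    destruct (HP x' y'). unfold D. rewrite sq_reC_add_sq_imC. nra.
  - unfold D. rewrite sq_reC_add_sq_imC. lra.
  - unfold D in HD0, Hmax. rewrite sq_reC_add_sq_imC in HD0.
    destruct (HP x0 y0). pose proof (Cmod_ge_0 (u x0 y0)).
    apply (max_point_absurd t b L rho A F a (mu x0 y0) (Cmod (u x0 y0))
             (Re (Cconj (u x0 y0) * f x0 y0))
             (reC u x0 y0 * lap (reC u) x0 y0 + imC u x0 y0 * lap (imC u) x0 y0)); try tauto.
    + nra.
    + lra.
    + eapply Rle_trans; [apply Re_Cconj_mul_le|].
      apply Rmult_le_compat_l; auto.
    + replace (t ^ 6) with ((t ^ 3) ^ 2) by ring.
      rewrite (solution_identity mu f u (t ^ 3) a x0 y0 (Heq x0 y0)). ring.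
    + apply lap_dot_le_at_max; try assumption; nra.
Qed.

(** * The potential near the circle [|x| = rho] *)

Section DecreasingProfile.
Variables (m : R -> R) (rho : R).
Hypotheses (Hs : smooth1 m) (Hd : forall r, 0 < r -> Derive m r < 0)
           (hrho : 0 < rho) (Hm : m rho = 0).

Let m_derive r : derivable_pt_lim m r (Derive m r).
Proof. apply is_derive_Reals, Derive_correct. exact (Hs 1%nat r). Qed.

Let neg_derive_continuous r : continuity_pt (fun r => - Derive m r) r.
Proof.
  apply (continuity_pt_opp (Derive m)), continuity_pt_filterlim.
  apply (ex_derive_continuous (Derive m)). exact (Hs 2%nat r).
Qed.

Lemma profile_nonpos_beyond r : rho <= r -> m r <= 0.
Proof.
  intros hr. destruct (Req_dec r rho) as [->|hne]; [lra|].
  destruct (MVT_cor2 m (Derive m) rho r) as [c [E hc]]; [lra | intros; apply m_derive|].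
  pose proof (Hd c ltac:(lra)). nra.
Qed.

Lemma profile_le_linear : exists L, 0 < L /\ forall r, 0 <= r <= rho -> m r <= L * (rho - r).
Proof.
  destruct (continuity_ab_maj (fun r => - Derive m r) 0 rho) as [r1 [Hr1 _]];
    [lra | intros; apply neg_derive_continuous|].
  exists (Rabs (Derive m r1) + 1). split; [pose proof (Rabs_pos (Derive m r1)); lra|].
  intros r hr. destruct (Req_dec r rho) as [->|hne]; [rewrite Hm; lra|].
  destruct (MVT_cor2 m (Derive m) r rho) as [c [E hc]]; [lra | intros; apply m_derive|].
  pose proof (Hr1 c ltac:(lra)). pose proof (Rle_abs (- Derive m r1)). rewrite Rabs_Ropp in *.
  nra.
Qed.

(* The slope is bounded away from 0 only on [rho/2, rho]; below [rho/2] monotonicity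
   takes over. *)
Lemma profile_ge_linear : exists c, 0 < c /\ forall r, 0 <= r <= rho -> c * (rho - r) <= m r.
Proof.
  destruct (continuity_ab_min (fun r => - Derive m r) (rho / 2) rho) as [r1 [Hr1 hr1]];
    [lra | intros; apply neg_derive_continuous|].
  set (c := - Derive m r1).
  assert (hc : 0 < c) by (pose proof (Hd r1 ltac:(lra)); unfold c; lra).
  assert (Hnear : forall r, rho / 2 <= r <= rho -> c * (rho - r) <= m r).
  { intros r hr. destruct (Req_dec r rho) as [->|hne]; [rewrite Hm; lra|].
    destruct (MVT_cor2 m (Derive m) r rho) as [r2 [E hr2]]; [lra | intros; apply m_derive|].
    pose proof (Hr1 r2 ltac:(lra)). simpl in *. unfold c. nra. }
  exists (c / 2). split; [lra|]. intros r hr.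
  destruct (Rle_lt_dec (rho / 2) r); [pose proof (Hnear r ltac:(lra)); nra|].
  pose proof (Hnear (rho / 2) ltac:(lra)).
  destruct (MVT_cor2 m (Derive m) r (rho / 2)) as [r2 [E hr2]]; [lra | intros; apply m_derive|].
  pose proof (Hd r2 ltac:(lra)). nra.
Qed.

End DecreasingProfile.

Lemma qrho_rnorm rho x y : 0 < rho ->
  qrho rho x y = (rho - rnorm x y) * (rho + rnorm x y) / (2 * rho).
Proof.
  intros hrho. unfold qrho, rnorm.
  pose proof (pow2_sqrt (x ^ 2 + y ^ 2) ltac:(nra)) as Hr.
  replace (rho ^ 2 - x ^ 2 - y ^ 2) with (rho ^ 2 - sqrt (x ^ 2 + y ^ 2) ^ 2) by (rewrite Hr; ring).
  field. lra.
Qed.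

Lemma mu_pos_part_bounds mu mu_rad rho : mu_hyp mu mu_rad rho ->
  exists L c, 0 < L /\ 0 < c /\ forall x y,
    mu x y <= L * Rmax (qrho rho x y) 0 /\ c * Rmax (qrho rho x y) 0 <= Rmax (mu x y) 0.
Proof.
  intros (_ & Hs & _ & Hrad & _ & Hd & hrho & Hm & _).
  destruct (profile_le_linear mu_rad rho Hs hrho Hm) as (L & hL & HL).
  destruct (profile_ge_linear mu_rad rho Hs Hd hrho Hm) as (c & hc & Hc).
  exists (2 * L), c. split; [lra|]. split; [lra|]. intros x y.
  rewrite Hrad, (qrho_rnorm rho x y hrho).
  set (r := rnorm x y). assert (hr : 0 <= r) by apply sqrt_pos.
  pose proof (Rmax_r (mu_rad r) 0). pose proof (Rmax_l (mu_rad r) 0).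
  destruct (Rle_dec r rho) as [hle|hgt].
  - set (q := (rho - r) * (rho + r) / (2 * rho)).
    assert (hq : (rho - r) / 2 <= q <= rho - r).
    { assert (Hq : q = (rho - r) * (1 / 2 + r / (2 * rho))) by (unfold q; field; lra).
      assert (0 <= r / (2 * rho) <= 1 / 2)
        by (split; [apply Rdiv_le_0_compat | apply Rle_div_l]; lra).
      rewrite Hq. split; nra. }
    rewrite Rmax_left by lra.
    pose proof (HL r ltac:(lra)). pose proof (Hc r ltac:(lra)). split; nra.
  - pose proof (profile_nonpos_beyond mu_rad rho Hs Hd hrho Hm r ltac:(lra)).
    rewrite Rmax_right.
    + lra.
    + apply Rmult_le_0_r; [|apply Rlt_le, Rinv_0_lt_compat; lra]. nra.
Qed.

Lemma Rpower_one_third eps : 0 < eps < 1 ->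
  0 < Rpower eps (1 / 3) < 1 /\ Rpower eps (1 / 3) ^ 3 = eps /\
  Rpower eps (2 / 3) = Rpower eps (1 / 3) ^ 2 /\ Rpower eps (- (1 / 3)) = / Rpower eps (1 / 3).
Proof.
  intros he. set (t := Rpower eps (1 / 3)).
  assert (ht : 0 < t) by apply exp_pos.
  assert (ht3 : t ^ 3 = eps).
  { unfold t. rewrite <- Rpower_pow, Rpower_mult by apply exp_pos.
    replace (1 / 3 * INR 3) with 1 by (simpl; field). apply Rpower_1; lra. }
  repeat split; auto.
  - apply Rnot_le_lt. intros H1. pose proof (pow_incr 1 t 3 ltac:(lra)). simpl in *. lra.
  - unfold t. rewrite <- Rpower_pow, Rpower_mult by apply exp_pos. f_equal. simpl. field.
  - apply Rpower_Ropp.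
Qed.

Lemma le_mul_of_sq_le (v s M : R) : 0 <= v -> 0 <= s -> 0 <= M ->
  v ^ 2 <= M * s ^ 2 -> v <= (M + 1) * s.
Proof.
  intros hv hs hM H. apply Rnot_lt_le. intros Hlt.
  assert (((M + 1) * s) ^ 2 < v ^ 2) by (apply Rsqr_incrst_1 in Hlt; unfold Rsqr in *; nra).
  nra.
Qed.

Section Estimates.
Variables (mu : R -> R -> R) (mu_rad : R -> R) (rho : R) (f : R -> R -> C) (f_rad : R -> R) (A : R).
Hypotheses (Hmu : mu_hyp mu mu_rad rho) (Hf : f_hyp f f_rad) (hA : 0 < A).

Lemma solution_sq_bound : exists K, 0 < K /\
  forall eps a u, 0 < eps < 1 -> Rabs a <= A -> is_solution mu f eps a u ->
  forall x y, Cmod (u x y) ^ 2 <= K * (Rmax (qrho rho x y) 0 + Rpower eps (1 / 3) ^ 2).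
Proof.
  destruct (mu_pos_part_bounds mu mu_rad rho Hmu) as (L & c & hL & _ & HL).
  assert (hrho : 0 < rho) by apply Hmu.
  destruct Hf as (_ & _ & _ & _ & _ & _ & [F HF] & _).
  assert (hF : 0 <= F) by (eapply Rle_trans; [apply Cmod_ge_0 | apply (HF 0 0)]).
  set (b := barrier_scale A F L rho).
  exists (b ^ 2 * (L + 1)). split.
  { pose proof (barrier_scale_ge A F L rho ltac:(lra) hF ltac:(lra) hrho). fold b in H. nra. }
  intros eps a u heps ha Hsol x y.
  destruct (Rpower_one_third eps heps) as (ht & ht3 & _).
  set (t := Rpower eps (1 / 3)) in *. rewrite <- ht3 in Hsol.
  assert (he : 0 < t ^ 2) by (apply pow_lt; lra).
  eapply Rle_trans.
  { apply (solution_sq_le_barrier mu f u rho L F A t a); try lra; auto. apply HL. }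
  unfold barrier. fold b. rewrite Rmult_assoc. apply Rmult_le_compat_l; [nra|].
  pose proof (spos_le (t ^ 2) (qrho rho x y) he). pose proof (Rmax_r (qrho rho x y) 0).
  assert (L * spos (t ^ 2) (qrho rho x y) <= L * (Rmax (qrho rho x y) 0 + t ^ 2 / 2))
    by (apply Rmult_le_compat_l; lra).
  nra.
Qed.

Lemma solution_le_sqrt_pos_part : exists K, 0 < K /\
  forall eps a u, 0 < eps < 1 -> Rabs a <= A -> is_solution mu f eps a u ->
  forall x y, Cmod (u x y) <= K * (sqrt (Rmax (mu x y) 0) + Rpower eps (1 / 3)).
Proof.
  destruct solution_sq_bound as (K & hK & HK).
  destruct (mu_pos_part_bounds mu mu_rad rho Hmu) as (L & c & _ & hc & Hc).
  exists (K / c + K + 1). split; [pose proof (Rdiv_lt_0_compat K c hK hc); lra|].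
  intros eps a u heps ha Hsol x y.
  destruct (Rpower_one_third eps heps) as (ht & _).
  set (t := Rpower eps (1 / 3)) in *. set (m := Rmax (mu x y) 0).
  pose proof (HK eps a u heps ha Hsol x y) as Hu. pose proof (proj2 (Hc x y)) as Hq.
  fold m t in Hu, Hq. set (q := Rmax (qrho rho x y) 0) in *.
  assert (hq : 0 <= q) by apply Rmax_r. assert (hm : 0 <= m) by apply Rmax_r.
  assert (Hqm : q <= m / c) by (apply Rle_div_r; lra).
  pose proof (sqrt_pos m). pose proof (pow2_sqrt m hm).
  apply le_mul_of_sq_le; [apply Cmod_ge_0 | lra | pose proof (Rdiv_le_0_compat K c); nra |].
  eapply Rle_trans; [exact Hu|].
  assert (K * q <= K / c * m) by (replace (K / c * m) with (K * (m / c)) by (field; lra); nra).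
  assert (0 <= K / c) by (apply Rdiv_le_0_compat; lra).
  assert (m + t ^ 2 <= (sqrt m + t) ^ 2) by nra.
  assert ((K / c + K) * (m + t ^ 2) <= (K / c + K) * (sqrt m + t) ^ 2)
    by (apply Rmult_le_compat_l; lra).
  nra.
Qed.

Lemma qrho_near_circle_le (h theta s0 s1 s2 : R) : 0 < rho -> 0 <= h -> s0 <= s1 ->
  Rmax (qrho rho (rho * cos theta + h * (s1 * cos theta - s2 * sin theta))
                 (rho * sin theta + h * (s1 * sin theta + s2 * cos theta))) 0 <= h * Rabs s0.
Proof.
  intros hrho hh hs.
  assert (Hq : qrho rho (rho * cos theta + h * (s1 * cos theta - s2 * sin theta))
                        (rho * sin theta + h * (s1 * sin theta + s2 * cos theta))
               = - h * s1 - h ^ 2 * (s1 ^ 2 + s2 ^ 2) / (2 * rho)).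
  { pose proof (sin2_cos2 theta) as Hcs. unfold Rsqr in Hcs. unfold qrho.
    apply Rmult_eq_reg_r with (2 * rho); [|lra]. field_simplify; [|lra..].
    replace (cos theta ^ 2) with (1 - sin theta ^ 2) by lra.
    ring. }
  rewrite Hq. pose proof (Rle_abs (- s0)). rewrite Rabs_Ropp in *.
  assert (0 <= h ^ 2 * (s1 ^ 2 + s2 ^ 2) / (2 * rho)) by (apply Rdiv_le_0_compat; nra).
  assert (h * (- s1) <= h * Rabs s0) by (apply Rmult_le_compat_l; lra).
  apply Rmax_lub; [lra | apply Rmult_le_pos; [lra | apply Rabs_pos]].
Qed.

Lemma rescaled_solution_bounded (s0 : R) : exists C0,
  forall eps a u, 0 < eps < 1 -> Rabs a <= A -> is_solution mu f eps a u ->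
  forall theta s1 s2, s0 <= s1 ->
    Rpower eps (- (1 / 3)) *
      Cmod (u (rho * cos theta + Rpower eps (2 / 3) * (s1 * cos theta - s2 * sin theta))
              (rho * sin theta + Rpower eps (2 / 3) * (s1 * sin theta + s2 * cos theta)))
    <= C0.
Proof.
  destruct solution_sq_bound as (K & hK & HK).
  assert (hrho : 0 < rho) by apply Hmu.
  exists (K * (Rabs s0 + 1) + 1).
  intros eps a u heps ha Hsol theta s1 s2 hs.
  destruct (Rpower_one_third eps heps) as (ht & _ & ht2 & ht').
  rewrite ht'. set (t := Rpower eps (1 / 3)) in *. set (h := Rpower eps (2 / 3)) in *.
  set (x := rho * cos theta + h * (s1 * cos theta - s2 * sin theta)).
  set (y := rho * sin theta + h * (s1 * sin theta + s2 * cos theta)).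
  pose proof (HK eps a u heps ha Hsol x y) as Hu.
  pose proof (qrho_near_circle_le h theta s0 s1 s2 hrho ltac:(nra) hs) as Hq.
  fold x y in Hq. rewrite ht2 in Hq.
  apply (Rmult_le_reg_l t); [lra|]. rewrite <- Rmult_assoc, Rinv_r, Rmult_1_l by lra.
  rewrite Rmult_comm. pose proof (Rabs_pos s0).
  apply le_mul_of_sq_le; [apply Cmod_ge_0 | lra | nra |].
  eapply Rle_trans; [exact Hu|]. fold t. nra.
Qed.

End Estimates.

Theorem mainTheorem6 (mu : R -> R -> R) (mu_rad : R -> R) (rho : R)
    (f : R -> R -> C) (f_rad : R -> R) :
  mu_hyp mu mu_rad rho -> f_hyp f f_rad ->
  forall A : R, 0 < A ->
  exists eps0 : R, 0 < eps0 /\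
    (exists K : R, 0 < K /\
       forall eps a (u : R -> R -> C), 0 < eps < eps0 -> Rabs a <= A ->
         is_solution mu f eps a u ->
         forall x y,
           Cmod (u x y) <= K * (sqrt (Rmax (mu x y) 0) + Rpower eps (1 / 3))) /\
    (forall s0 : R, exists C0 : R,
       forall eps a (u : R -> R -> C), 0 < eps < eps0 -> Rabs a <= A ->
         is_solution mu f eps a u ->
         forall theta s1 s2, s0 <= s1 ->
           Rpower eps (- (1 / 3)) *
             Cmod (u (rho * cos theta + Rpower eps (2 / 3) * (s1 * cos theta - s2 * sin theta))
                     (rho * sin theta + Rpower eps (2 / 3) * (s1 * sin theta + s2 * cos theta)))
           <= C0).
Proof.
  intros Hmu Hf A hA.
  exists 1. split; [lra|]. split.
  - exact (solution_le_sqrt_pos_part mu mu_rad rho f f_rad A Hmu Hf hA).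
  - exact (rescaled_solution_bounded mu mu_rad rho f f_rad A Hmu Hf hA).
Qed.
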